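(* Let $Q$ be a commutative automorphic loop of nilpotency class $3$. Then $(a,b,c)=(c,b,a)^{-1}$ and $(a,b,c)=(a,c,b)(b,a,c)$ for every $a,b,c\in Q$.
   Context: A loop is a set with a binary operation such that all left and right translations $L_a:b\mapsto ab$, $R_a:b\mapsto ba$ are bijections and there is a two-sided identity $1$. The inner mapping group is the stabilizer of $1$ in the group generated by all translations; $Q$ is automorphic if all inner mappings are automorphisms (such loops are power-associative, so inverses are two-sided). The associator $(a,b,c)$ is defined by $(ab)c=(a(bc))(a,b,c)$. The center $Z(Q)$ is the set of elements fixed by all inner mappings; $Z_0=1$, $Z_{i+1}(Q)$ is the preimage of $Z(Q/Z_i(Q))$, and $Q$ has nilpotency class $n$ if $Z_{n-1}(Q)\neq Q=Z_n(Q)$. *)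

From mathcomp Require Import ssreflect ssrfun ssrbool.
Set Implicit Arguments.
Unset Strict Implicit.

Section Loops.
Variable T : Type.
Variable mul : T -> T -> T.
Variable e : T.

Definition is_loop : Prop :=
  [/\ forall a, bijective (fun b => mul a b),
      forall a, bijective (fun b => mul b a),
      forall x, mul e x = x & forall x, mul x e = x].

(* Multiplication group of the loop Q/r, where r is a congruence of Q (r = eq gives
   Q itself).  Maps on the quotient are represented by maps on T respecting r;
   the group is generated by all left/right translations and their inverses. *)
Inductive mlt (r : T -> T -> Prop) : (T -> T) -> Prop :=
  | mlt_id : mlt r (fun x => x)
  | mlt_L a : mlt r (fun x => mul a x)
  | mlt_R a : mlt r (fun x => mul x a)
  | mlt_Linv a g :
      (forall x, r (mul a (g x)) x) -> (forall x, r (g (mul a x)) x) ->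
      (forall x y, r x y -> r (g x) (g y)) -> mlt r g
  | mlt_Rinv a g :
      (forall x, r (mul (g x) a) x) -> (forall x, r (g (mul x a)) x) ->
      (forall x y, r x y -> r (g x) (g y)) -> mlt r g
  | mlt_comp f g : mlt r f -> mlt r g -> mlt r (fun x => f (g x)).

Definition inner_map (r : T -> T -> Prop) (f : T -> T) : Prop :=
  mlt r f /\ r (f e) e.

(* Preimage in Q of the center of Q/r: elements whose class is fixed by all
   inner mappings of Q/r. *)
Definition center_mod (r : T -> T -> Prop) (x : T) : Prop :=
  forall f, inner_map r f -> r (f x) x.

Definition coset_rel (N : T -> Prop) (x y : T) : Prop :=
  exists n, N n /\ y = mul x n.

Fixpoint upper_center (n : nat) : T -> Prop :=
  match n with
  | 0 => fun x => x = e
  | S k => center_mod (coset_rel (upper_center k))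
  end.

Definition nilpotency_class (n : nat) : Prop :=
  (exists x, ~ upper_center (Nat.pred n) x) /\ (forall x, upper_center n x).

Definition commutative_loop : Prop := forall x y, mul x y = mul y x.

(* Automorphic: every inner mapping of Q is an automorphism (bijectivity is
   automatic since inner mappings lie in the multiplication group). *)
Definition automorphic : Prop :=
  forall f, inner_map eq f -> forall x y, f (mul x y) = mul (f x) (f y).

(* With ldiv the inverse of left translation: (ab)c = (a(bc)) (a,b,c). *)
Definition associator (ldiv : T -> T -> T) (a b c : T) : T :=
  ldiv (mul a (mul b c)) (mul (mul a b) c).

End Loops.

From mathcomp Require Import ssreflect ssrfun ssrbool.

(* Z_1 consists of nuclear elements, and class 3 puts every associator in Z_2.
   For m in Z_2 the inner mapping L(x, m) = L_{xm}^{-1} L_x L_m is an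
   automorphism of the form t |-> t k_t with k_t in Z_1, and k_t is the same
   for both bracketings of abc; applying it to (a(bc))(a,b,c) = (ab)c forces
   k_{(a,b,c)} = 1, that is (xm)(a,b,c) = x(m(a,b,c)).  By commutativity,
   x = (ab)c, m = (c,b,a) gives the first identity and x = a(bc), m = (a,c,b)
   the second. *)

Section CommutativeAutomorphicLoop.

Variables (T : Type) (mul : T -> T -> T) (e : T) (ldiv : T -> T -> T).
Hypothesis hloop : is_loop mul e.
Hypothesis mulK : forall a, cancel (mul a) (ldiv a).
Hypothesis divK : forall a, cancel (ldiv a) (mul a).
Hypothesis mulC : commutative_loop mul.
Hypothesis haut : automorphic mul e.

Declare Scope loop_scope.
Local Open Scope loop_scope.
Local Infix "*" := mul : loop_scope.
Local Notation inv x := (ldiv x e).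
Local Notation Z := (upper_center mul e).
Local Notation modZ k := (coset_rel mul (Z k)).
Local Notation assoc := (associator mul ldiv).

Lemma mul1q x : e * x = x. Proof. by case: hloop. Qed.
Lemma mulq1 x : x * e = x. Proof. by case: hloop. Qed.

Lemma mulIq a : injective (mul a). Proof. exact: can_inj (mulK a). Qed.

Lemma mulqI a x y : x * a = y * a -> x = y.
Proof. by rewrite !(mulC _ a); apply: mulIq. Qed.

Definition Lmap x y t := ldiv (x * y) (x * (y * t)).

Lemma LmapE x y t : (x * y) * Lmap x y t = x * (y * t).
Proof. exact: divK. Qed.

Lemma inner_map_Lmap (r : T -> T -> Prop) x y :
  (forall z, r z z) -> (forall a u v, r u v -> r (ldiv a u) (ldiv a v)) ->
  inner_map mul e r (Lmap x y).
Proof.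
move=> r_refl r_ldiv; split; last by rewrite /Lmap mulq1 -{2}(mulq1 (x * y)) mulK.
apply: (@mlt_comp _ _ _ (ldiv (x * y)) (fun t => x * (y * t))).
- apply: (mlt_Linv (a := x * y)) => [z|z|]; rewrite ?divK ?mulK //; exact: r_ldiv.
- exact: mlt_comp (mlt_L _ _ x) (mlt_L _ _ y).
Qed.

Lemma inner_map_Lmap_eq x y : inner_map mul e eq (Lmap x y).
Proof. by apply: inner_map_Lmap => // a u v ->. Qed.

Lemma mlt_equiv (r r' : T -> T -> Prop) f :
  (forall x y, r x y <-> r' x y) -> mlt mul r f -> mlt mul r' f.
Proof.
move=> rr'; elim=> [|a|a|a g H1 H2 H3|a g H1 H2 H3|f' g _ Hf _ Hg].
- exact: mlt_id.
- exact: mlt_L.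
- exact: mlt_R.
- apply: (mlt_Linv (a := a)) => [x|x|x y /rr' Hxy]; apply/rr'.
  + exact: H1.
  + exact: H2.
  + exact: H3.
- apply: (mlt_Rinv (a := a)) => [x|x|x y /rr' Hxy]; apply/rr'.
  + exact: H1.
  + exact: H2.
  + exact: H3.
- exact: mlt_comp.
Qed.

Lemma upper_center_e k : Z k e.
Proof. by case: k => [|k] //= f []. Qed.

Lemma modZ_refl k x : modZ k x x.
Proof. by exists e; rewrite mulq1; split; first exact: upper_center_e. Qed.

Lemma modZ_mul {k} x {z} : Z k z -> modZ k x (x * z).
Proof. by exists z. Qed.

Lemma modZ0E x y : modZ 0 x y <-> x = y.
Proof. by split=> [[n [/= -> ->]]|<-]; [rewrite mulq1 | exact: modZ_refl]. Qed.

Lemma center1E z : Z 1 z <-> forall f, inner_map mul e eq f -> f z = z.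
Proof.
have mltE f : mlt mul (modZ 0) f <-> mlt mul eq f.
  by split; apply: mlt_equiv => x y; [exact: modZ0E | exact: iff_sym (modZ0E x y)].
split=> [Hz f [Hf Hfe] | Hz f [Hf /modZ0E Hfe]]; last first.
  by apply/modZ0E; rewrite Hz //; split; first exact/mltE.
by apply/modZ0E; apply: Hz; split; [exact/mltE | apply/modZ0E].
Qed.

Lemma center1_nuclear {z} x y : Z 1 z -> (x * y) * z = x * (y * z).
Proof. by move/center1E/(_ _ (inner_map_Lmap_eq x y)) => {1}<-; rewrite LmapE. Qed.

Lemma center1_mul {z1 z2} : Z 1 z1 -> Z 1 z2 -> Z 1 (z1 * z2).
Proof.
move=> /center1E H1 /center1E H2; apply/center1E => f Hf.
by rewrite haut // H1 // H2.
Qed.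

Lemma center1_inv {z} : Z 1 z -> Z 1 (inv z).
Proof.
move=> /center1E Hz; apply/center1E => f Hf; apply: (@mulIq z).
by rewrite divK -{1}(Hz f Hf) -haut // divK; case: Hf.
Qed.

Lemma center1_mulK {z} x : Z 1 z -> (x * z) * inv z = x.
Proof. by move=> Hz; rewrite center1_nuclear ?divK ?mulq1 //; exact: center1_inv. Qed.

Lemma mul_center1C {k1 k2} x y : Z 1 k1 -> Z 1 k2 ->
  (x * k1) * (y * k2) = (x * y) * (k1 * k2).
Proof.
move=> H1 H2; rewrite -center1_nuclear // (mulC _ y) -center1_nuclear //.
by rewrite (mulC y) center1_nuclear.
Qed.

Lemma modZ1_ldiv a u v : modZ 1 u v -> modZ 1 (ldiv a u) (ldiv a v).
Proof.
case=> k [Hk ->]; exists k; split=> //.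
by apply: (@mulIq a); rewrite divK -center1_nuclear // divK.
Qed.

Lemma mlt_modZ1_compat {f} :
  mlt mul (modZ 1) f -> forall u v, modZ 1 u v -> modZ 1 (f u) (f v).
Proof.
elim=> [|a|a|a g _ _ Hg|a g _ _ Hg|f' g _ Hf' _ Hg] u v //.
- by case=> k [Hk ->]; exists k; rewrite center1_nuclear.
- by case=> k [Hk ->]; exists k; rewrite (mulC _ a) -center1_nuclear // (mulC a).
- exact: Hg.
- exact: Hg.
- by move=> /Hg /Hf'.
Qed.

Lemma center2_right_defect {n} x y : Z 2 n ->
  exists2 k, Z 1 k & (x * y) * n = (x * (y * n)) * k.
Proof.
move=> Hn; have [k [Hk En]] := Hn _ (inner_map_Lmap _ x y (modZ_refl 1) modZ1_ldiv).
by exists k; rewrite // {1}En -center1_nuclear // LmapE.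
Qed.

Lemma center2_middle_defect {m} x t : Z 2 m ->
  exists2 k, Z 1 k & x * (m * t) = ((x * m) * t) * k.
Proof.
move=> Hm; have [k1 Hk1 E1] := center2_right_defect x t Hm.
have [k2 Hk2 E2] := center2_right_defect t x Hm.
have Hk1' := center1_inv Hk1.
exists (k2 * inv k1); first exact: center1_mul.
rewrite -(center1_nuclear _ _ Hk1').
by rewrite (mulC (x * m) t) -E2 (mulC t x) E1 center1_mulK // (mulC m t).
Qed.

Lemma center2_mul_center1 {n z} : Z 2 n -> Z 1 z -> Z 2 (n * z).
Proof.
move=> Hn Hz f Hf; have [k1 [Hk1 E1]] := Hn f Hf.
have [k2 [Hk2 E2]] := mlt_modZ1_compat (proj1 Hf) _ _ (modZ_mul n Hz).
have Hk1z := center1_mul Hk1 Hz.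
exists (inv k2 * (k1 * z)); split; first exact: center1_mul (center1_inv Hk2) Hk1z.
rewrite E2 -(center1_nuclear _ _ Hk1z) (center1_mulK _ Hk2).
by rewrite {1}E1 (center1_nuclear _ _ Hz).
Qed.

Lemma modZ2_ldiv a u v : modZ 2 u v -> modZ 2 (ldiv a u) (ldiv a v).
Proof.
case=> n [Hn ->]; have [k Hk E] := center2_right_defect a (ldiv a u) Hn.
exists (n * k); split; first exact: center2_mul_center1.
apply: (@mulIq a); rewrite divK -(center1_nuclear _ _ Hk) -(center1_nuclear _ _ Hk).
by rewrite -E divK.
Qed.

Lemma Lmap_center2 {m} x t : Z 2 m -> exists2 k, Z 1 k & Lmap x m t = t * k.
Proof.
move=> Hm; have [k Hk E] := center2_middle_defect x t Hm.
by exists k; rewrite // /Lmap E (center1_nuclear _ _ Hk) mulK.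
Qed.

Lemma Lmap_center2_assoc {m} x a b c : Z 2 m ->
  exists2 k, Z 1 k & Lmap x m ((a * b) * c) = ((a * b) * c) * k /\
                     Lmap x m (a * (b * c)) = (a * (b * c)) * k.
Proof.
move=> Hm; have hom := haut _ (inner_map_Lmap_eq x m).
have [ka Hka Ea] := Lmap_center2 x a Hm.
have [kb Hkb Eb] := Lmap_center2 x b Hm.
have [kc Hkc Ec] := Lmap_center2 x c Hm.
exists ((ka * kb) * kc); first exact: center1_mul (center1_mul Hka Hkb) Hkc.
rewrite !hom Ea Eb Ec; split.
  by rewrite (mul_center1C a b Hka Hkb) (mul_center1C _ c (center1_mul Hka Hkb) Hkc).
rewrite (mul_center1C b c Hkb Hkc) (mul_center1C a _ Hka (center1_mul Hkb Hkc)).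
by rewrite (center1_nuclear _ _ Hkc).
Qed.

Lemma Lmap_center2_associator {m} x a b c : Z 2 m ->
  Lmap x m (assoc a b c) = assoc a b c.
Proof.
move=> Hm; have hom := haut _ (inner_map_Lmap_eq x m).
have [K HK [Eu Ev]] := Lmap_center2_assoc x a b c Hm.
have [k Hk Ey] := Lmap_center2 x (assoc a b c) Hm.
have Hy : a * (b * c) * assoc a b c = (a * b) * c by rewrite divK.
have := f_equal (Lmap x m) Hy.
rewrite hom Ev Ey (mul_center1C _ _ HK Hk) Hy Eu => /(@mulIq _) EK.
have Ek : k = e by apply: (mulqI K); rewrite mul1q mulC EK.
by rewrite Ek mulq1.
Qed.

Lemma associator_mulA {m} x a b c : Z 2 m ->
  (x * m) * assoc a b c = x * (m * assoc a b c).
Proof. by move=> Hm; rewrite -{1}(Lmap_center2_associator x a b c Hm) LmapE. Qed.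

Hypothesis class3 : forall x, Z 3 x.

Lemma associator_center2 a b c : Z 2 (assoc a b c).
Proof.
have [n [Hn Ec]] := class3 c _ (inner_map_Lmap _ a b (modZ_refl 2) modZ2_ldiv).
have [k Hk E] := center2_right_defect (a * b) (Lmap a b c) Hn.
rewrite LmapE -Ec in E.
suff -> : assoc a b c = n * inv k by apply: center2_mul_center1 (center1_inv Hk).
apply: (@mulIq (a * (b * c))); rewrite divK -(center1_nuclear _ _ (center1_inv Hk)).
by rewrite E center1_mulK.
Qed.

Lemma associator_inv a b c : assoc a b c = inv (assoc c b a).
Proof.
have Ecba : assoc c b a = ldiv ((a * b) * c) (a * (b * c)).
  by rewrite /associator (mulC c) (mulC b a) (mulC (c * b)) (mulC c b).
have := associator_mulA ((a * b) * c) a b c (associator_center2 c b a).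
rewrite Ecba divK {1}/associator divK -{1}(mulq1 ((a * b) * c)) => /(@mulIq _) ->.
by rewrite mulK.
Qed.

Lemma associator_split a b c : assoc a b c = assoc a c b * assoc b a c.
Proof.
have Ebac : assoc b a c = ldiv ((a * c) * b) ((a * b) * c).
  by rewrite /associator (mulC b a) (mulC b).
have Eacb : assoc a c b = ldiv (a * (b * c)) ((a * c) * b).
  by rewrite /associator (mulC c b).
have := associator_mulA (a * (b * c)) b a c (associator_center2 a c b).
rewrite Eacb Ebac !divK => Eabc.
by rewrite /associator {1}Eabc mulK.
Qed.

End CommutativeAutomorphicLoop.

Theorem lemma2p7 (T : Type) (mul : T -> T -> T) (e : T) (ldiv : T -> T -> T)
  (hloop : is_loop mul e)
  (hldiv1 : forall a, cancel (mul a) (ldiv a))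
  (hldiv2 : forall a, cancel (ldiv a) (mul a))
  (hcomm : commutative_loop mul)
  (haut : automorphic mul e)
  (hnil : nilpotency_class mul e 3) :
  forall a b c : T,
    associator mul ldiv a b c = ldiv (associator mul ldiv c b a) e /\
    associator mul ldiv a b c =
      mul (associator mul ldiv a c b) (associator mul ldiv b a c).
Proof.
move=> a b c; have class3 := proj2 hnil.
split; first exact: (associator_inv _ mul e ldiv).
exact: (associator_split _ mul e ldiv).
Qed.
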